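(* Let $R$ be a discrete valuation ring with maximal ideal $\mathfrak m$, fraction field $F$ and valuation $\mathrm{ord}$. For integers $m\ge1$, $n\ge1$ let $K^M_n(F,m)$ be the subgroup of $K^M_n(F)$ generated by the Milnor symbols $\{y_1,\dots,y_n\}$ ($y_i\in F^\times$) with $\sum_{i=1}^n\mathrm{ord}(y_i-1)\ge m$. Then for every $n\ge0$, $$K^M_{n+1}(F,m)\subseteq(1+\mathfrak m^m)K^M_n(F).$$
   Context: $(1+\mathfrak m^m)K^M_n(F)$ denotes the subgroup of $K^M_{n+1}(F)$ generated by the products $\{u\}\cdot x$ with $u\in 1+\mathfrak m^m$ and $x\in K^M_n(F)$; for $n=0$ it is the image of $1+\mathfrak m^m$ in $K^M_1(F)=F^\times$. Convention $\mathrm{ord}(0)=\infty$. *)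

From HB Require Import structures.
From mathcomp Require Import all_boot all_order all_algebra.
From mathcomp Require Import ring_quotient generic_quotient.
From mathcomp Require Import boolp.
From mathcomp Require Import freeg.

Set Implicit Arguments.
Unset Strict Implicit.
Unset Printing Implicit Defensive.

Import Order.TTheory GRing.Theory Num.Theory.
Local Open Scope ring_scope.
Local Open Scope quotient_scope.

Definition zspan (G : zmodType) (S : G -> Prop) : G -> Prop :=
  fun x => forall H : G -> Prop,
    H 0 -> (forall a b, H a -> H b -> H (a - b)) ->
    (forall a, S a -> H a) -> H x.

Lemma zspan0 (G : zmodType) (S : G -> Prop) : zspan S 0.
Proof. by move=> H H0. Qed.

Lemma zspanB (G : zmodType) (S : G -> Prop) a b :
  zspan S a -> zspan S b -> zspan S (a - b).
Proof. rewrite /zspan => Ha Hb H H0 HBB HS; apply: (HBB); [exact: (Ha H H0 HBB HS)|exact: (Hb H H0 HBB HS)]. Qed.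

Section Milnor.
Variable F : fieldType.

Definition Fx := {x : F | x != 0}.

Definition fxmul (a b : Fx) : Fx :=
  exist _ (val a * val b) (mulf_neq0 (valP a) (valP b)).

Definition tset n (t : n.-tuple Fx) (i : 'I_n) (c : Fx) : n.-tuple Fx :=
  [tuple if j == i then c else tnth t j | j < n].

(* free abelian group on n-tuples of elements of F^x,
   i.e. (a presentation of) the n-fold tensor power of F^x as a Z-module
   before imposing multilinearity *)
Definition Free n := {freeg (n.-tuple Fx) / int}.

Definition milnor_relgen n (x : Free n) : Prop :=
  (exists (t : n.-tuple Fx) (i : 'I_n) (a b : Fx),
      x = << tset t i (fxmul a b) >> - << tset t i a >> - << tset t i b >>)
  \/ (exists (t : n.-tuple Fx) (i j : 'I_n),
      (j = i.+1 :> nat) /\ val (tnth t i) + val (tnth t j) = 1 /\ x = << t >>).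

Definition milnor_rel n : {pred Free n} :=
  fun x => `[< zspan (@milnor_relgen n) x >].

Lemma milnor_rel_closed n : GRing.zmod_closed (@milnor_rel n).
Proof.
split; first by apply/asboolP; exact: zspan0.
by move=> a b /asboolP Ha /asboolP Hb; apply/asboolP; exact: zspanB.
Qed.

HB.instance Definition _ n :=
  GRing.isZmodClosed.Build (Free n) (@milnor_rel n) (milnor_rel_closed n).

Definition KM n := Quotient.quot (@milnor_rel n).

Definition msym n (t : n.-tuple Fx) : KM n := \pi_(KM n) (<< t >>).

Definition lmul_free n (u : Fx) (z : Free n) : Free n.+1 :=
  fglift (fun t : n.-tuple Fx => << [tuple of u :: t] >> : Free n.+1) z.

Definition lmul n (u : Fx) (z : Free n) : KM n.+1 := \pi_(KM n.+1) (lmul_free u z).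

End Milnor.

(* Discrete valuations.  ord : F -> int is the normalized discrete
   valuation on F^x (its value at 0 is irrelevant; ord(0) = +oo is
   handled explicitly below). The DVR is R = {x | x = 0 \/ 0 <= ord x},
   with maximal ideal m = {x | x = 0 \/ 1 <= ord x}, m^k = {x | x = 0 \/ k <= ord x}. *)
Definition discrete_valuation (F : fieldType) (ord : F -> int) : Prop :=
  [/\ (forall x y : F, x != 0 -> y != 0 -> ord (x * y) = ord x + ord y),
      (forall x y : F, x != 0 -> y != 0 -> x + y != 0 ->
                         Num.min (ord x) (ord y) <= ord (x + y))
    & (exists p : F, p != 0 /\ ord p = 1)].

(* x \in m^k (with the convention ord 0 = +oo) *)
Definition in_mpow (F : fieldType) (ord : F -> int) (k : nat) (x : F) : Prop :=
  x = 0 \/ (k%:Z <= ord x).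

(* sum_i ord(y_i - 1) >= m, with ord(0) = +oo *)
Definition ord_sum_ge (F : fieldType) (ord : F -> int) (m : nat) (y : seq F) : Prop :=
  (exists2 a, a \in y & a = 1) \/ (m%:Z <= \sum_(a <- y) ord (a - 1)).

Definition KMm (F : fieldType) (ord : F -> int) (m n : nat) : KM F n -> Prop :=
  zspan (fun x => exists t : n.-tuple (Fx F),
                    ord_sum_ge ord m [seq val a | a <- t] /\ x = msym t).

Definition onePlus_KM (F : fieldType) (ord : F -> int) (k n : nat)
  : KM F n.+1 -> Prop :=
  zspan (fun x => exists (u : Fx F) (z : Free F n),
                    in_mpow ord k (val u - 1) /\ x = lmul u z).

Arguments KMm {F} ord m n _.
Arguments onePlus_KM {F} ord k n _.

(* Let y_0 and y be entries of a symbol with ord (y_0 - 1) = a >= 1 and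
   ord (y - 1) = b >= 1, put x = 1 - y_0 and c = y_0 + x y = 1 - (1 - y_0)(1 - y),
   so that ord (c - 1) = a + b.  The Steinberg relation for y_0/c + x y/c = 1 and
   {y_0, x} = 0 give {y_0, y} = {c, x y} - {c, y_0} - {c, c}, with c in the first
   slot in all three terms.  Absorbing the entries one at a time in this way
   moves the whole sum of the ord (y_i - 1) into the first entry (after using
   anti-commutativity to bring an entry in 1 + m to the front), and a symbol
   whose first entry lies in 1 + m^m is of the form {u} . x. *)

From mathcomp Require Import all_boot all_order all_algebra perm.
From mathcomp Require Import ring_quotient generic_quotient boolp freeg.
From mathcomp Require Import zify ring.

Set Implicit Arguments.
Unset Strict Implicit.
Unset Printing Implicit Defensive.

Import Order.TTheory GRing.Theory Num.Theory.
Local Open Scope ring_scope.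
Local Open Scope quotient_scope.

Lemma zspan_gen (G : zmodType) (S : G -> Prop) a : S a -> zspan S a.
Proof. by move=> Sa H _ _; apply. Qed.

Lemma zspanN (G : zmodType) (S : G -> Prop) a : zspan S a -> zspan S (- a).
Proof. by move=> Sa; rewrite -sub0r; apply: zspanB Sa; apply: zspan0. Qed.

Lemma zspan_sub (G : zmodType) (S S' : G -> Prop) a :
  (forall b, S b -> zspan S' b) -> zspan S a -> zspan S' a.
Proof. by move=> SS' Sa; apply: Sa; [exact: zspan0 | exact: zspanB | exact: SS']. Qed.

Lemma addr_self_eq0 (G : zmodType) (a : G) : a + a = a -> a = 0.
Proof. by move/(canRL (addrK a)); rewrite subrr. Qed.

Section Units.
Variable F : fieldType.
Local Notation Fx := (Fx F).

Definition mkFx (x : F) (x_neq0 : x != 0) : Fx := exist _ x x_neq0.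
Definition fx1 : Fx := mkFx (oner_neq0 F).
Definition fxinv (a : Fx) : Fx := mkFx (invr_neq0 (valP a)).
Fact fxopp_neq0 (a : Fx) : - val a != 0. Proof. by rewrite oppr_eq0 (valP a). Qed.
Definition fxopp (a : Fx) : Fx := mkFx (fxopp_neq0 a).

Lemma fxmul11 : fxmul fx1 fx1 = fx1.
Proof. by apply: val_inj; rewrite /= mulr1. Qed.

Lemma fxmulV (a : Fx) : fxmul a (fxinv a) = fx1.
Proof. by apply: val_inj; rewrite /= mulfV ?(valP a). Qed.

Section SteinbergForm.
Variables (G : zmodType) (B : Fx -> Fx -> G).
Hypothesis BDl : forall a b c, B (fxmul a b) c = B a c + B b c.
Hypothesis BDr : forall a b c, B a (fxmul b c) = B a b + B a c.
Hypothesis B_steinberg : forall a b, val a + val b = 1 -> B a b = 0.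

Lemma stein1l c : B fx1 c = 0.
Proof. by apply: addr_self_eq0; rewrite -BDl fxmul11. Qed.

Lemma stein1r c : B c fx1 = 0.
Proof. by apply: addr_self_eq0; rewrite -BDr fxmul11. Qed.

Lemma steinVl a c : B (fxinv a) c = - B a c.
Proof. by apply/eqP; rewrite -addr_eq0 addrC -BDl fxmulV stein1l. Qed.

Lemma steinVr a c : B c (fxinv a) = - B c a.
Proof. by apply/eqP; rewrite -addr_eq0 addrC -BDr fxmulV stein1r. Qed.

Lemma stein_opp a : B a (fxopp a) = 0.
Proof.
have [a1|a_neq1] := eqVneq (val a) 1.
  by rewrite (_ : a = fx1) ?stein1l //; apply: val_inj.
have a_neq0 := valP a.
have b_neq0 : 1 - val a != 0 by rewrite subr_eq0 eq_sym.
have c_neq0 : 1 - (val a)^-1 != 0 by rewrite subr_eq0 eq_sym invr_eq1.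
pose b := mkFx b_neq0; pose c := mkFx c_neq0.
(* -a = (1 - a) / (1 - a^-1) *)
have -> : fxopp a = fxmul b (fxinv c).
  apply: val_inj => /=; apply: (mulIf c_neq0).
  by rewrite -mulrA mulVf // mulr1 mulrBr mulr1 mulNr mulfV // opprK addrC.
by rewrite BDr B_steinberg ?steinVr -?steinVl ?B_steinberg ?add0r ?oppr0 //= addrC subrK.
Qed.

Lemma stein_anti a b : B a b = - B b a.
Proof.
have oppMl : fxopp (fxmul a b) = fxmul (fxopp a) b by apply: val_inj; rewrite /= mulNr.
have oppMr : fxopp (fxmul a b) = fxmul a (fxopp b) by apply: val_inj; rewrite /= mulrN.
apply/eqP; rewrite -addr_eq0 -(stein_opp (fxmul a b)) BDl {1}oppMl oppMr !BDr !stein_opp.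
by rewrite add0r addr0.
Qed.

Lemma stein_sum u w c : val u + val w = val c -> B u w = B c w - B c u - B c c.
Proof.
move=> uwc; have /B_steinberg : val (fxmul u (fxinv c)) + val (fxmul w (fxinv c)) = 1.
  by rewrite /= -mulrDl uwc mulfV ?(valP c).
rewrite BDl !BDr !steinVl !steinVr (stein_anti u c) opprK => /eqP.
rewrite -addrA addr_eq0 => /eqP ->.
by rewrite opprD !opprB opprK addrCA addrC (addrC (- B c u)).
Qed.

Lemma stein_mix u v x c : val u + val x = 1 -> val c = val u + val x * val v ->
  B u v = B c (fxmul x v) - B c u - B c c.
Proof.
by move=> ux cE; rewrite -[B u v]add0r -(B_steinberg ux) -BDr; apply: stein_sum.
Qed.

End SteinbergForm.

Section Symbols.
Variable n : nat.
Implicit Types (t : n.-tuple Fx) (i j k : 'I_n).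

Lemma pi_milnor_rel (z : Free F n) : milnor_rel z -> \pi_(KM F n) z = 0.
Proof.
move=> rel_z; have : z - 0 \in milnor_rel (n:=n) by rewrite subr0.
by rewrite Quotient.idealrBE => /eqP ->; rewrite raddf0.
Qed.

Lemma pi_milnor_relgen (z : Free F n) : milnor_relgen z -> \pi_(KM F n) z = 0.
Proof. by move=> gen_z; apply: pi_milnor_rel; apply/asboolP; apply: zspan_gen. Qed.

Lemma msym_tsetM t i a b :
  msym (tset t i (fxmul a b)) = msym (tset t i a) + msym (tset t i b).
Proof.
apply/eqP; rewrite -subr_eq0 opprD addrA /msym -!raddfB; apply/eqP/pi_milnor_relgen.
by left; exists t, i, a, b.
Qed.

Lemma msym_steinberg_adj t i j :
  j = i.+1 :> nat -> val (tnth t i) + val (tnth t j) = 1 -> msym t = 0.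
Proof. by move=> ji tij; apply: pi_milnor_relgen; right; exists t, i, j. Qed.

Lemma msym_eq0 t i : val (tnth t i) = 1 -> msym t = 0.
Proof.
move=> ti1; have -> : t = tset t i fx1.
  by apply: eq_from_tnth => k; rewrite tnth_mktuple; case: eqP => // ->; apply: val_inj.
by apply: addr_self_eq0; rewrite -msym_tsetM fxmul11.
Qed.

Lemma tnth_tset t i c k : tnth (tset t i c) k = if k == i then c else tnth t k.
Proof. by rewrite tnth_mktuple. Qed.

Lemma tset_tnth t i : tset t i (tnth t i) = t.
Proof. by apply: eq_from_tnth => k; rewrite tnth_tset; case: eqP => // ->. Qed.

Lemma tsetC t i j a b : i != j -> tset (tset t i a) j b = tset (tset t j b) i a.
Proof.
move=> ij; apply: eq_from_tnth => k; rewrite !tnth_tset.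
by case: (eqVneq k i) => // ->; rewrite (negbTE ij).
Qed.

Lemma ord_ltn_neq i j : (i < j)%N -> i != j.
Proof. by move=> ij; rewrite -val_eqE /= neq_ltn ij. Qed.

Definition msym2 t i j a b := msym (tset (tset t i a) j b).

Lemma msym2_tnth t i j : msym2 t i j (tnth t i) (tnth t j) = msym t.
Proof. by rewrite /msym2 !tset_tnth. Qed.

Lemma msym2Dl t i j a b c : i != j ->
  msym2 t i j (fxmul a b) c = msym2 t i j a c + msym2 t i j b c.
Proof. by move=> ij; rewrite /msym2 !(tsetC _ _ _ ij) msym_tsetM. Qed.

Lemma msym2Dr t i j a b c :
  msym2 t i j a (fxmul b c) = msym2 t i j a b + msym2 t i j a c.
Proof. exact: msym_tsetM. Qed.

Lemma tnth_tset2 t i j a b : i != j ->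
  tnth (tset (tset t i a) j b) i = a /\ tnth (tset (tset t i a) j b) j = b.
Proof. by move=> ij; rewrite !tnth_tset eqxx (negbTE ij) eqxx. Qed.

Lemma msym2_anti_adj t i j : j = i.+1 :> nat ->
  forall a b, msym2 t i j a b = - msym2 t i j b a.
Proof.
move=> ji; have ij : i != j by apply: ord_ltn_neq; rewrite ji.
apply: stein_anti (fun a b c => msym2Dl t a b c ij) (msym2Dr t i j) _ => a b ab.
by apply: (msym_steinberg_adj ji); have [-> ->] := tnth_tset2 t a b ij.
Qed.

Lemma msym_steinberg t i j :
  (i < j)%N -> val (tnth t i) + val (tnth t j) = 1 -> msym t = 0.
Proof.
move=> /subnKC; move: (j - i.+1)%N => d; elim: d t j => [|d IH] t j jE tij.
  by apply: (msym_steinberg_adj (i:=i) (j:=j)) => //; rewrite -jE addn0.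
have j'_lt : (j.-1 < n)%N by rewrite (leq_ltn_trans (leq_pred j)).
pose j' := Ordinal j'_lt.
have jE' : j = j'.+1 :> nat by rewrite /= -jE addnS.
have ij' : i != j' by apply: ord_ltn_neq; rewrite /= -jE; lia.
have ij : i != j by apply: ord_ltn_neq; rewrite -jE; lia.
have j'j : j' != j by apply: ord_ltn_neq; rewrite jE'.
(* swapping the entries j - 1 and j moves the pair one step closer *)
rewrite -(msym2_tnth t j' j) (msym2_anti_adj t jE') /msym2 (IH _ j') ?oppr0 //.
  by rewrite /= -jE addnS.
by rewrite !tnth_tset (negbTE ij) (negbTE ij') (negbTE j'j) eqxx.
Qed.

Lemma msym2_steinberg t i j : (i < j)%N ->
  forall a b, val a + val b = 1 -> msym2 t i j a b = 0.
Proof.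
move=> lt_ij a b ab; apply: (msym_steinberg lt_ij).
by have [-> ->] := tnth_tset2 t a b (ord_ltn_neq lt_ij).
Qed.

Lemma msym2_anti t i j : (i < j)%N -> forall a b, msym2 t i j a b = - msym2 t i j b a.
Proof.
move=> lt_ij; have ij := ord_ltn_neq lt_ij.
exact: stein_anti (fun a b c => msym2Dl t a b c ij) (msym2Dr t i j) (msym2_steinberg t lt_ij).
Qed.

Lemma msym2_mix t i j u v x c : (i < j)%N ->
  val u + val x = 1 -> val c = val u + val x * val v ->
  msym2 t i j u v = msym2 t i j c (fxmul x v) - msym2 t i j c u - msym2 t i j c c.
Proof.
move=> lt_ij ux cE; have ij := ord_ltn_neq lt_ij.
exact: (stein_mix (fun a b c => msym2Dl t a b c ij) (msym2Dr t i j)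
                  (msym2_steinberg t lt_ij) ux cE).
Qed.

Lemma tnth_tswap t i j k :
  tnth (tset (tset t i (tnth t j)) j (tnth t i)) k = tnth t (tperm i j k).
Proof.
rewrite !tnth_tset; case: tpermP => [->|->|/eqP/negbTE-> /eqP/negbTE->]; rewrite ?eqxx //.
by case: eqP => [->|].
Qed.

Lemma sum_tswap (f : Fx -> nat) t i j :
  (\sum_k f (tnth (tset (tset t i (tnth t j)) j (tnth t i)) k))%N = (\sum_k f (tnth t k))%N.
Proof.
by rewrite (reindex_inj (@perm_inj _ (tperm i j))); apply: eq_bigr => k _; rewrite tnth_tswap tpermK.
Qed.

End Symbols.

Lemma lmul_tuple n (u : Fx) (s : n.-tuple Fx) : lmul u << s >> = msym [tuple of u :: s].
Proof. by rewrite /lmul /lmul_free liftU scale1r. Qed.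

End Units.

Section Valuation.
Variables (F : fieldType) (ord : F -> int).
Hypothesis ord_dv : discrete_valuation ord.

Lemma ordM x y : x != 0 -> y != 0 -> ord (x * y) = ord x + ord y.
Proof. by case: ord_dv => ordM _ _; apply: ordM. Qed.

Lemma ord_1 : ord 1 = 0.
Proof. by apply: addr_self_eq0; rewrite -ordM ?mulr1 ?oner_neq0. Qed.

Lemma ordN x : x != 0 -> ord (- x) = ord x.
Proof.
have N1_neq0 : (-1 : F) != 0 by rewrite oppr_eq0 oner_neq0.
have : ord (-1) + ord (-1) = 0 by rewrite -ordM // mulrNN mulr1 ord_1.
by move=> ordN1 x_neq0; rewrite -mulN1r ordM // (_ : ord (-1) = 0) ?add0r //; lia.
Qed.

(* The junk value [level 1 = 0] is harmless: a symbol with an entry 1 vanishes. *)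
Definition level (y : Fx F) : nat :=
  if (val y != 1) && (0 <= ord (val y - 1)) then `|ord (val y - 1)|%N else 0.

Lemma level_gt0 y : (0 < level y)%N -> val y != 1 /\ ord (val y - 1) = level y.
Proof. by rewrite /level; case: ifP => // /andP[y_neq1 ord_ge0] _; rewrite gez0_abs. Qed.

Lemma ord_le_level y : val y != 1 -> ord (val y - 1) <= level y.
Proof.
move=> y_neq1; rewrite /level y_neq1 /=.
by case: ifP => [/gez0_abs -> // | /negbT]; rewrite -ltNge => /ltW.
Qed.

Lemma sum_level_ge N m (t : N.-tuple (Fx F)) : (forall i, val (tnth t i) != 1) ->
  ord_sum_ge ord m [seq val a | a <- t] -> (m <= \sum_i level (tnth t i))%N.
Proof.
move=> t_neq1 [[_ /mapP[a /tnthP[i ->] ->] ti1] | ord_sum_m].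
  by case/eqP: (t_neq1 i).
rewrite -lez_nat; apply: le_trans ord_sum_m _; rewrite big_map big_tuple.
rewrite -[leRHS]intz sumMz; apply: ler_sum => i _; rewrite intz.
exact: ord_le_level.
Qed.

Definition circ (u v : F) := 1 - (1 - u) * (1 - v).

Lemma ord_circ_sub1 u v : (0 < level u)%N -> (0 < level v)%N ->
  circ (val u) (val v) - 1 != 0 /\ ord (circ (val u) (val v) - 1) = (level u + level v)%N.
Proof.
move=> /level_gt0[u_neq1 ordu] /level_gt0[v_neq1 ordv].
have u1_neq0 : val u - 1 != 0 by rewrite subr_eq0.
have v1_neq0 : val v - 1 != 0 by rewrite subr_eq0.
have -> : circ (val u) (val v) - 1 = - ((val u - 1) * (val v - 1)) by rewrite /circ; ring.
by rewrite oppr_eq0 mulf_neq0 // ordN ?mulf_neq0 // ordM // ordu ordv.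
Qed.

Lemma circ_neq0 u v : (0 < level u)%N -> (0 < level v)%N -> circ (val u) (val v) != 0.
Proof.
move=> lu lv; have [_] := ord_circ_sub1 lu lv.
move=> ordc; apply/eqP => c0; move: ordc.
by rewrite c0 sub0r ordN ?oner_neq0 // ord_1; lia.
Qed.

Lemma level_circ u v c : (0 < level u)%N -> (0 < level v)%N ->
  val c = circ (val u) (val v) -> level c = (level u + level v)%N.
Proof.
move=> lu lv cE; have [] := ord_circ_sub1 lu lv; rewrite -cE => c1_neq0 ordc.
by rewrite /level ordc -subr_eq0 c1_neq0.
Qed.

End Valuation.

Section Absorption.
Variables (F : fieldType) (ord : F -> int) (n : nat).
Hypothesis ord_dv : discrete_valuation ord.
Implicit Types t : n.+1.-tuple (Fx F).
Local Notation level := (level ord).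

Lemma onePlus_KM_msym k t : (0 < level (tnth t ord0))%N ->
  (k <= level (tnth t ord0))%N -> onePlus_KM ord k n (msym t).
Proof.
move=> /level_gt0[_ ordt0] k_le; apply: zspan_gen.
exists (tnth t ord0), << [tuple of behead t] >>; split; first by right; rewrite ordt0.
by rewrite lmul_tuple -tuple_eta.
Qed.

Lemma onePlus_KM_msym_absorb (J : seq 'I_n.+1) : uniq J -> ord0 \notin J ->
  forall t k, (0 < level (tnth t ord0))%N ->
  (k <= level (tnth t ord0) + \sum_(j <- J) level (tnth t j))%N ->
  onePlus_KM ord k n (msym t).
Proof.
elim: J => [|i J IH] /=.
  by move=> _ _ t k t0; rewrite big_nil addn0; apply: onePlus_KM_msym.
rewrite inE negb_or => /andP[iJ uJ] /andP[i0 J0] t k t0; rewrite big_cons.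
have [ti0|ti] := posnP (level (tnth t i)); first by rewrite ti0; apply: IH.
move=> k_le; have lt0i : (@ord0 n < i)%N by rewrite lt0n eq_sym.
set u := tnth t ord0 in t0 k_le *; set v := tnth t i in ti k_le *.
have u1_neq0 : 1 - val u != 0 by rewrite subr_eq0 eq_sym; case: (level_gt0 t0).
pose x := mkFx u1_neq0; pose c := mkFx (circ_neq0 ord_dv t0 ti).
rewrite -(msym2_tnth t ord0 i) (msym2_mix t lt0i (x := x) (c := c)); first last.
- by rewrite /= /circ; ring.
- by rewrite /= addrC subrK.
have leaf w : onePlus_KM ord k n (msym2 t ord0 i c w).
  have [tc _] := tnth_tset2 t c w (ord_ltn_neq lt0i).
  have lc : level c = (level u + level v)%N by apply: level_circ.
  apply: IH => //; rewrite tc lc; first by rewrite addn_gt0 t0.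
  rewrite -addnA (eq_big_seq (fun j => level (tnth t j))) // => j jJ.
  by rewrite !tnth_tset (negbTE (memPn iJ j jJ)) (negbTE (memPn J0 j jJ)).
by apply: zspanB; [apply: zspanB|]; apply: leaf.
Qed.

Lemma onePlus_KM_msym_lead k t : (0 < level (tnth t ord0))%N ->
  (k <= \sum_i level (tnth t i))%N -> onePlus_KM ord k n (msym t).
Proof.
move=> t0 k_le.
apply: (@onePlus_KM_msym_absorb [seq j <- enum 'I_n.+1 | j != ord0]) => //.
- exact/filter_uniq/enum_uniq.
- by rewrite mem_filter eqxx.
- by rewrite big_filter big_enum_cond -(bigD1 ord0 (P := xpredT)).
Qed.

Lemma onePlus_KM_msym_sum k t : (0 < k)%N ->
  (k <= \sum_i level (tnth t i))%N -> onePlus_KM ord k n (msym t).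
Proof.
move=> k_gt0 k_le; have [t0|t0] := posnP (level (tnth t ord0)); last first.
  exact: onePlus_KM_msym_lead.
have /forallPn[i] : ~~ [forall (i | true), level (tnth t i) == 0%N].
  by rewrite -sum_nat_eq0 -lt0n (leq_trans k_gt0 k_le).
rewrite /= -lt0n => ti; have lt0i : (@ord0 n < i)%N.
  by rewrite lt0n; apply: contraTneq ti => i0; rewrite (_ : i = ord0) ?t0 //; apply: val_inj.
rewrite -(msym2_tnth t ord0 i) (msym2_anti t lt0i); apply: zspanN.
apply: onePlus_KM_msym_lead; first by rewrite tnth_tswap tpermL.
by rewrite /= (sum_tswap level).
Qed.

End Absorption.

Theorem lemma3p3 (F : fieldType) (ord : F -> int)
  (hord : discrete_valuation ord) (m n : nat) (hm : (1 <= m)%N) :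
  forall x : KM F n.+1, KMm ord m n.+1 x -> onePlus_KM ord m n x.
Proof.
move=> x; apply: zspan_sub => _ [t [ord_sum_m ->]].
have [[i /msym_eq0 ->]|t_neq1] := pselect (exists i, val (tnth t i) = 1).
  exact: zspan0.
apply: (onePlus_KM_msym_sum hord hm).
by apply: sum_level_ge ord_sum_m => i; apply/eqP => ti1; apply: t_neq1; exists i.
Qed.
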